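(* Let $S(\lambda)=\frac12\begin{bmatrix}\lambda_1^2&\lambda_1\lambda_2&\lambda_1\lambda_2&\lambda_2^2&\sqrt3\end{bmatrix}$ on ${\mathbb B}^2$, let $C=\begin{bmatrix}\frac12&0&0\end{bmatrix}$, $D=\begin{bmatrix}0&0&0&0&\frac{\sqrt3}{2}\end{bmatrix}$, and for $\gamma\in{\mathbb C}$ let $A_{\gamma,1}=\begin{bmatrix}0&1&0\\0&0&0\\ \gamma&0&0\end{bmatrix}$, $A_{\gamma,2}=\begin{bmatrix}0&0&1\\-\gamma&0&0\\0&0&0\end{bmatrix}$, ${\mathbf A}_\gamma=(A_{\gamma,1},A_{\gamma,2})$. Then $S\in{\mathcal S}_2({\mathbb C}^5,{\mathbb C})$, and for every $\gamma$ with $|\gamma|<\sqrt{3/8}$ the pair $(C,{\mathbf A}_\gamma)$ is contractive and observable and there exist $B_{\gamma,1},B_{\gamma,2}\in{\mathbb C}^{3\times5}$ such that $S(\lambda)=D+C(I-\lambda_1A_{\gamma,1}-\lambda_2A_{\gamma,2})^{-1}(\lambda_1B_{\gamma,1}+\lambda_2B_{\gamma,2})$ is a weakly coisometric (observable) realization of $S$. Moreover, for $\gamma\neq\gamma'$ the pairs $(C,{\mathbf A}_\gamma)$ and $(C,{\mathbf A}_{\gamma'})$ are not unitarily equivalent.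
   Context: ${\mathcal S}_d({\mathcal U},{\mathcal Y})$ is the set of ${\mathcal L}({\mathcal U},{\mathcal Y})$-valued holomorphic $S$ on the unit ball ${\mathbb B}^d\subset{\mathbb C}^d$ such that $M_S:f\mapsto Sf$ is a contraction from ${\mathcal H}_{\mathcal U}(k_d)$ into ${\mathcal H}_{\mathcal Y}(k_d)$, where ${\mathcal H}_{\mathcal Y}(k_d)$ is the reproducing kernel Hilbert space with kernel $I_{\mathcal Y}/(1-\langle\lambda,\zeta\rangle)$. A pair $(C,{\mathbf A})$, $C\in{\mathcal L}({\mathcal X},{\mathcal Y})$, ${\mathbf A}=(A_1,\dots,A_d)$, is contractive if $\sum_jA_j^*A_j+C^*C\le I$, observable if $C(I-\sum_j\lambda_jA_j)^{-1}x\equiv0$ on ${\mathbb B}^d$ implies $x=0$. Two pairs $(C,{\mathbf A})$, $(C',{\mathbf A}')$ are unitarily equivalent if there is a unitary $U$ with $C'U=C$ and $A_j'U=UA_j$ for all $j$. With $A=\mathrm{col}(A_j)$, $B=\mathrm{col}(B_j)$, $Z(\lambda)=[\lambda_1I\ \cdots\ \lambda_dI]$, the realization $S(\lambda)=D+C(I-Z(\lambda)A)^{-1}Z(\lambda)B$ is weakly coisometric if ${\mathbf U}=\begin{bmatrix}A&B\\C&D\end{bmatrix}$ is a contraction and ${\mathbf U}^*$ is isometric on ${\mathcal D}\oplus{\mathcal Y}$, ${\mathcal D}=\overline{\mathrm{span}}\{Z(\zeta)^*(I-A^*Z(\zeta)^* )^{-1}C^*y:\zeta\in{\mathbb B}^d,y\in{\mathcal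 Y}\}$. *)

From mathcomp Require Import all_boot all_algebra.
From mathcomp Require Import reals.
From mathcomp.real_closed Require Import complex.
Set Implicit Arguments. Unset Strict Implicit. Unset Printing Implicit Defensive.
Import GRing.Theory Num.Theory.
Local Open Scope ring_scope.

Section Defs.
Variable K : numClosedFieldType.

Definition adjm m n (M : 'M[K]_(m, n)) : 'M[K]_(n, m) := (map_mx Num.conj M)^T.

Definition inner n (x y : 'cV[K]_n) : K := \sum_i x i 0 * (y i 0)^*.
Definition sqnorm n (x : 'cV[K]_n) : K := inner x x.

Definition ptinner d (l z : 'I_d -> K) : K := \sum_j l j * (z j)^*.
Definition in_ball d (l : 'I_d -> K) : Prop := ptinner l l < 1.

Definition kd d (l z : 'I_d -> K) : K := (1 - ptinner l z)^-1.

(* [DA_norm_le f r] : f belongs to H_Y(k_d) (Y = K^m) with norm <= r.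
   Aronszajn's description of the RKHS with kernel k_d(.,.) I_Y:
   |<f, sum_i k_{zeta_i} y_i>|^2 <= r^2 ||sum_i k_{zeta_i} y_i||^2 for every
   finite family, where <f, k_zeta y> = <f(zeta), y>. *)
Definition DA_norm_le d m (f : ('I_d -> K) -> 'cV[K]_m) (r : K) : Prop :=
  forall (N : nat) (z : 'I_N -> ('I_d -> K)) (y : 'I_N -> 'cV[K]_m),
    (forall i, in_ball (z i)) ->
    `| \sum_i inner (f (z i)) (y i) | ^+ 2
      <= r ^+ 2 * \sum_i \sum_j kd (z i) (z j) * inner (y j) (y i).

(* S in S_d(K^p, K^m): M_S : f |-> S f is a contraction H_U(k_d) -> H_Y(k_d).
   (Holomorphy of S is implied, as S u = M_S(u) lies in H_Y(k_d).) *)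
Definition schur_class d p m (S : ('I_d -> K) -> 'M[K]_(m, p)) : Prop :=
  forall (f : ('I_d -> K) -> 'cV[K]_p) (r : K), 0 <= r ->
    DA_norm_le f r -> DA_norm_le (fun l => S l *m f l) r.

Definition psd n (M : 'M[K]_n) : Prop :=
  forall x : 'cV[K]_n, 0 <= (adjm x *m M *m x) 0 0.

(* sum_j lambda_j M_j  (= Z(lambda) col(M_j)) *)
Definition Zsum d m n (M : 'I_d -> 'M[K]_(m, n)) (l : 'I_d -> K) : 'M[K]_(m, n) :=
  \sum_j l j *: M j.

Definition contractive_pair d n m (C : 'M[K]_(m, n)) (A : 'I_d -> 'M[K]_n) : Prop :=
  psd (1%:M - \sum_j adjm (A j) *m A j - adjm C *m C).

Definition observable d n m (C : 'M[K]_(m, n)) (A : 'I_d -> 'M[K]_n) : Prop :=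
  forall x : 'cV[K]_n,
    (forall l, in_ball l -> C *m invmx (1%:M - Zsum A l) *m x = 0) -> x = 0.

Definition unitary n (U : 'M[K]_n) : Prop :=
  adjm U *m U = 1%:M /\ U *m adjm U = 1%:M.

Definition unit_equiv d n m (C : 'M[K]_(m, n)) (A : 'I_d -> 'M[K]_n)
    (C' : 'M[K]_(m, n)) (A' : 'I_d -> 'M[K]_n) : Prop :=
  exists U : 'M[K]_n, unitary U /\ C' *m U = C /\ forall j, A' j *m U = U *m A j.

Definition realizes d n p m (S : ('I_d -> K) -> 'M[K]_(m, p))
    (A : 'I_d -> 'M[K]_n) (B : 'I_d -> 'M[K]_(n, p))
    (C : 'M[K]_(m, n)) (D : 'M[K]_(m, p)) : Prop :=
  forall l, in_ball l -> S l = D + C *m invmx (1%:M - Zsum A l) *m Zsum B l.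

Definition colnorm d n (x : 'I_d -> 'cV[K]_n) : K := \sum_j sqnorm (x j).

(* U = [A B; C D] : X (+) U -> X^d (+) Y is a contraction *)
Definition colligation_contraction d n p m (A : 'I_d -> 'M[K]_n)
    (B : 'I_d -> 'M[K]_(n, p)) (C : 'M[K]_(m, n)) (D : 'M[K]_(m, p)) : Prop :=
  forall (x : 'cV[K]_n) (u : 'cV[K]_p),
    colnorm (fun j => A j *m x + B j *m u) + sqnorm (C *m x + D *m u)
      <= sqnorm x + sqnorm u.

(* generators Z(zeta)^adj (I - A^adj Z(zeta)^adj)^{-1} C^adj y of the space D *)
Definition Dgen d n m (A : 'I_d -> 'M[K]_n) (C : 'M[K]_(m, n))
    (z : 'I_d -> K) (y : 'cV[K]_m) : 'I_d -> 'cV[K]_n :=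
  fun j => (z j)^* *: (invmx (1%:M - \sum_k (z k)^* *: adjm (A k)) *m adjm C *m y).

(* v in D = span of the generators (closed, since finite-dimensional) *)
Definition in_Dspace d n m (A : 'I_d -> 'M[K]_n) (C : 'M[K]_(m, n))
    (v : 'I_d -> 'cV[K]_n) : Prop :=
  exists (N : nat) (z : 'I_N -> ('I_d -> K)) (y : 'I_N -> 'cV[K]_m),
    (forall i, in_ball (z i)) /\
    forall j, v j = \sum_i Dgen A C (z i) (y i) j.

(* U^adj is isometric on D (+) Y *)
Definition adjoint_isometric_on d n p m (A : 'I_d -> 'M[K]_n)
    (B : 'I_d -> 'M[K]_(n, p)) (C : 'M[K]_(m, n)) (D : 'M[K]_(m, p)) : Prop :=
  forall (v : 'I_d -> 'cV[K]_n) (y : 'cV[K]_m), in_Dspace A C v ->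
    sqnorm (\sum_j adjm (A j) *m v j + adjm C *m y)
      + sqnorm (\sum_j adjm (B j) *m v j + adjm D *m y)
      = colnorm v + sqnorm y.

Definition weakly_coisometric_realization d n p m
    (S : ('I_d -> K) -> 'M[K]_(m, p)) (A : 'I_d -> 'M[K]_n)
    (B : 'I_d -> 'M[K]_(n, p)) (C : 'M[K]_(m, n)) (D : 'M[K]_(m, p)) : Prop :=
  [/\ realizes S A B C D, colligation_contraction A B C D
    & adjoint_isometric_on A B C D].

End Defs.

Section Example.
Variable R : realType.
Local Notation CC := (R[i]).

Definition i0 : 'I_2 := ord0.
Definition i1 : 'I_2 := lift ord0 ord0.

Definition Sex (l : 'I_2 -> CC) : 'M[CC]_(1, 5) :=
  2^-1 *: \row_(k < 5)
    [:: l i0 ^+ 2; l i0 * l i1; l i0 * l i1; l i1 ^+ 2; sqrtC 3]`_k.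

Definition Cex : 'M[CC]_(1, 3) := \row_(k < 3) [:: 2^-1; 0; 0]`_k.

Definition Dex : 'M[CC]_(1, 5) := \row_(k < 5) [:: 0; 0; 0; 0; sqrtC 3 / 2]`_k.

Definition A1ex (g : CC) : 'M[CC]_3 :=
  \matrix_(i < 3, j < 3) nth 0 (nth [::] [:: [:: 0; 1; 0]; [:: 0; 0; 0]; [:: g; 0; 0]] i) j.
Definition A2ex (g : CC) : 'M[CC]_3 :=
  \matrix_(i < 3, j < 3) nth 0 (nth [::] [:: [:: 0; 0; 1]; [:: - g; 0; 0]; [:: 0; 0; 0]] i) j.
Definition Aex (g : CC) : 'I_2 -> 'M[CC]_3 :=
  fun j => if j == i0 then A1ex g else A2ex g.

End Example.

From mathcomp Require Import all_boot all_algebra.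
From mathcomp Require Import reals.
From mathcomp.real_closed Require Import complex.
From mathcomp Require Import ring order.
Import Order.TTheory GRing.Theory Num.Theory.
Local Open Scope ring_scope.
Set Implicit Arguments. Unset Strict Implicit.

(* Writing <l, z> for the inner product on C^2, S(l) S(z)^* = (3 + <l, z>^2) / 4, so
   k(l, z) (1 - S(l) S(z)^* ) = (1 + <l, z>) / 4 is a sum of three rank-one positive
   kernels and S is a contractive multiplier.  N = l1 A_1 + l2 A_2 satisfies N^3 = 0,
   so (I - N)^-1 = I + N + N^2 is polynomial and C (I - N)^-1 = [1 l1 l2] / 2, which
   gives observability and, for an explicit B, the realization of S.  Contractivity
   of (C, A) and of the colligation are sum-of-squares identities with the weight
   3/8 - |gamma|^2 >= 0.  The generators of D are (conj z1 w, conj z2 w) with w a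
   multiple of (1, conj z1, conj z2), and on such vectors U^* is isometric by a
   polynomial identity.  Finally C A_1 A_2 C^* = -gamma/4 is a unitary invariant of
   (C, A). *)

Section DruryArveson.
Variable K : numClosedFieldType.

(* Rewriting with the generic rmorph lemmas leaves the RMorphism instance, not conj,
   as head symbol, and conjCK no longer matches. *)
Lemma conjCD (x y : K) : (x + y)^* = x^* + y^*. Proof. exact: rmorphD. Qed.
Lemma conjCN (x : K) : (- x)^* = - x^*. Proof. exact: rmorphN. Qed.
Lemma conjCM (x y : K) : (x * y)^* = x^* * y^*. Proof. exact: rmorphM. Qed.
Lemma conjCX (x : K) n : (x ^+ n)^* = x^* ^+ n. Proof. exact: rmorphXn. Qed.
Lemma conjCV (x : K) : (x^-1)^* = x^*^-1. Proof. exact: fmorphV. Qed.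
Lemma conjC_sum I r (P : pred I) (F : I -> K) :
  (\sum_(i <- r | P i) F i)^* = \sum_(i <- r | P i) (F i)^*.
Proof. exact: rmorph_sum. Qed.

Lemma conjC_half : (2^-1 : K)^* = 2^-1.
Proof. by rewrite conjCV conjC_nat. Qed.

Lemma conjC_sqrtC3 : (sqrtC 3 : K)^* = sqrtC 3.
Proof. by rewrite geC0_conj // sqrtC_ge0 ler0n. Qed.

Lemma sqrtC3_neq0 : (sqrtC 3 : K) != 0.
Proof. by rewrite sqrtC_eq0 pnatr_eq0. Qed.

Lemma adjmM m n p (M : 'M[K]_(m, n)) (N : 'M[K]_(n, p)) :
  adjm (M *m N) = adjm N *m adjm M.
Proof. by rewrite /adjm map_mxM trmx_mul. Qed.

Lemma inner_mulmxl m n (M : 'M[K]_(m, n)) (x : 'cV[K]_n) (y : 'cV[K]_m) :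
  inner (M *m x) y = inner x (adjm M *m y).
Proof.
rewrite /inner; under eq_bigr do rewrite mxE mulr_suml.
rewrite exchange_big; apply: eq_bigr => k _ /=.
rewrite mxE conjC_sum mulr_sumr; apply: eq_bigr => i _.
by rewrite /adjm !mxE conjCM conjCK mulrCA mulrA.
Qed.

Lemma invmx_rinv n (M P : 'M[K]_n.+1) : M *m P = 1%:M -> invmx M = P.
Proof.
move=> MP1; have [uM _] := mulmx1_unit MP1.
by rewrite -[invmx M]mulmx1 -MP1 mulmxA mulVmx // mul1mx.
Qed.

Lemma mul_conjC_lt_sqrtC (x c : K) : 0 <= c -> `|x| < sqrtC c -> x * x^* < c.
Proof. by move=> c_ge0; rewrite normC_def ltr_sqrtC // nnegrE mul_conjC_ge0. Qed.

Lemma gram_sum_ge0 N n (X : 'I_n -> 'I_N -> K) :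
  0 <= \sum_i \sum_j \sum_k (X k i)^* * X k j.
Proof.
have gram (x : 'I_N -> K) : \sum_i \sum_j (x i)^* * x j = (\sum_i x i)^* * \sum_j x j.
  by rewrite conjC_sum mulr_suml; apply: eq_bigr => i _; rewrite mulr_sumr.
under eq_bigr do rewrite exchange_big /=.
by rewrite exchange_big sumr_ge0 // => k _; rewrite gram mulrC mul_conjC_ge0.
Qed.

Lemma norm_ptinner_lt1 d (a b : 'I_d -> K) :
  in_ball a -> in_ball b -> `|ptinner a b| < 1.
Proof.
rewrite /in_ball /ptinner => a1 b1.
have AGM j : `|a j * (b j)^*| <= (a j * (a j)^* + b j * (b j)^*) / 2.
  rewrite normrM norm_conjC -!normCK.
  by have [+ _] := real_leif_mean_square (normr_real (a j)) (normr_real (b j)).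
apply: le_lt_trans (ler_norm_sum _ _ _) _.
apply: le_lt_trans (ler_sum _ (fun j _ => AGM j)) _.
rewrite -mulr_suml big_split /= ltr_pdivrMr ?ltr0n // mul1r.
by rewrite -[2]/(1 + 1) ltrD.
Qed.

Lemma ball_kd_denom_neq0 d (a b : 'I_d -> K) :
  in_ball a -> in_ball b -> 1 - ptinner a b != 0.
Proof.
move=> a1 b1; rewrite subr_eq0; apply/eqP => ab1.
by have := norm_ptinner_lt1 a1 b1; rewrite -ab1 normr1 ltxx.
Qed.

Lemma unit_equiv_compress d n m (C C' : 'M[K]_(m, n)) (A A' : 'I_d -> 'M[K]_n) j k :
  unit_equiv C A C' A' -> C' *m A' j *m A' k *m adjm C' = C *m A j *m A k *m adjm C.
Proof.
move=> [U [[_ UU1] [CU AU]]].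
rewrite -CU adjmM -!mulmxA; congr (_ *m _).
by rewrite !mulmxA -AU -(mulmxA _ U) -AU -!mulmxA (mulmxA U) UU1 mul1mx.
Qed.

Lemma schur_class_of_kernel_ge0 d p m (S : ('I_d -> K) -> 'M[K]_(m, p)) :
  (forall N (z : 'I_N -> 'I_d -> K) (y : 'I_N -> 'cV[K]_m),
     (forall i, in_ball (z i)) ->
     0 <= \sum_i \sum_j kd (z i) (z j) *
            (inner (y j) (y i) - inner (adjm (S (z j)) *m y j) (adjm (S (z i)) *m y i))) ->
  schur_class S.
Proof.
move=> SK f r r_ge0 fr N z y zB.
under eq_bigr do rewrite inner_mulmxl.
apply: le_trans (fr N z _ zB) _.
rewrite ler_wpM2l ?exprn_ge0 // -subr_ge0 -sumrB.
under eq_bigr do rewrite -sumrB.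
under eq_bigr do under eq_bigr do rewrite -mulrBr.
exact: SK.
Qed.
End DruryArveson.

Section Example.
Variable R : realType.
Local Notation CC := (R[i]).
Local Notation Cex := (@Cex R).
Local Notation Dex := (@Dex R).

Ltac expand := rewrite ?(mxE, summxE, big_ord_recl, big_ord0).
Ltac conj_simpl := rewrite ?(conjCD, conjCN, conjCM, conjCX, conjCV, conjC0, conjC1,
  conjCK, conjC_half, conjC_sqrtC3).

Lemma schur_class_Sex : schur_class (@Sex R).
Proof.
apply: schur_class_of_kernel_ge0 => N z y zB.
pose X (k : 'I_3) i := 2^-1 * y i 0 0 * [:: 1; (z i i0)^*; (z i i1)^*]`_k.
rewrite [leRHS](_ : _ = \sum_i \sum_j \sum_k (X k i)^* * X k j); first exact: gram_sum_ge0.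
apply: eq_bigr => i _; apply: eq_bigr => j _.
have -> : inner (y j) (y i) - inner (adjm (Sex (z j)) *m y j) (adjm (Sex (z i)) *m y i)
    = (1 - ptinner (z i) (z j)) * \sum_k (X k i)^* * X k j.
  rewrite /inner /ptinner /Sex /adjm /X; expand => /=; conj_simpl.
  by field: (sqrtCK (3 : CC)).
by rewrite /kd mulrA mulVf ?mul1r // ball_kd_denom_neq0.
Qed.

Lemma contractive_pair_ex g : g * g^* < 3 / 8 -> contractive_pair Cex (Aex g).
Proof.
move=> g_small x.
rewrite [leRHS](_ : _ = 2 * (3 / 8 - g * g^*) * (x ord0 0 * (x ord0 0)^*) :> CC).
  by rewrite mulr_ge0 ?mul_conjC_ge0 // mulr_ge0 ?ler0n // subr_ge0 ltW.
by rewrite /adjm; expand => /=; conj_simpl; field.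
Qed.

Definition resolvent (g : CC) (l : 'I_2 -> CC) : 'M[CC]_3 :=
  \matrix_(i < 3, j < 3) nth 0 (nth [::]
    [:: [:: 1; l i0; l i1];
        [:: - l i1 * g; 1 - l i0 * l i1 * g; - l i1 ^+ 2 * g];
        [:: l i0 * g; l i0 ^+ 2 * g; 1 + l i0 * l i1 * g]] i) j.

Lemma resolventE g l : invmx (1%:M - Zsum (Aex g) l) = resolvent g l.
Proof.
apply: invmx_rinv; apply/matrixP => i j; rewrite /Zsum; expand.
by case: i => [[|[|[|i]]] ?] //; case: j => [[|[|[|j]]] ?] //=; ring.
Qed.

Definition pt (a b : CC) : 'I_2 -> CC := fun j => if j == i0 then a else b.

Lemma in_ball_pt a b : a * a^* + b * b^* < 1 -> in_ball (pt a b).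
Proof. by rewrite /in_ball /ptinner; expand => /=; rewrite addr0. Qed.

Lemma Cex_resolvent_mul g l (x : 'cV[CC]_3) :
  (Cex *m resolvent g l *m x) 0 0 =
  2^-1 * (x ord0 0 + l i0 * x (lift ord0 ord0) 0 + l i1 * x (lift ord0 (lift ord0 ord0)) 0).
Proof. by expand => /=; ring. Qed.

Lemma observable_ex g : observable Cex (Aex g).
Proof.
move=> x Cx0.
have lin a b : a * a^* + b * b^* < 1 ->
    x ord0 0 + a * x (lift ord0 ord0) 0 + b * x (lift ord0 (lift ord0 ord0)) 0 = 0.
  move=> /in_ball_pt ab; have /matrixP/(_ 0 0) := Cx0 _ ab.
  rewrite resolventE Cex_resolvent_mul mxE => /eqP.
  by rewrite mulf_eq0 invr_eq0 pnatr_eq0 => /eqP.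
have half_neq0 : (2^-1 : CC) != 0 by rewrite invr_eq0 pnatr_eq0.
have ball0 : (0 : CC) * 0^* + 0 * 0^* < 1 by rewrite mul0r addr0 ltr01.
have ball1 : (2^-1 : CC) * 2^-1^* + 0 * 0^* < 1.
  by rewrite conjC_half mul0r addr0 -invfM -natrM invf_lt1 ?ltr0n ?ltr1n.
have ball2 : (0 : CC) * 0^* + 2^-1 * 2^-1^* < 1 by rewrite addrC.
have := lin _ _ ball0; rewrite !mul0r !addr0 => x0.
have := lin _ _ ball1; rewrite mul0r addr0 x0 add0r => /eqP.
rewrite mulf_eq0 (negbTE half_neq0) => /eqP x1.
have := lin _ _ ball2; rewrite mul0r addr0 x0 add0r => /eqP.
rewrite mulf_eq0 (negbTE half_neq0) => /eqP x2.
apply/matrixP => i j; rewrite (ord1 j) mxE.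
case: i => [[|[|[|i]]] ?] //=.
- by rewrite -x0; congr (x _ _); apply: val_inj.
- by rewrite -x1; congr (x _ _); apply: val_inj.
- by rewrite -x2; congr (x _ _); apply: val_inj.
Qed.

Definition Bex (g : CC) : 'I_2 -> 'M[CC]_(3, 5) := fun j =>
  \matrix_(i < 3, k < 5) nth 0 (nth [::] (if j == i0 then
    [:: [:: 0; 0; 0; 0; 0]; [:: 1; 0; 0; 0; 0]; [:: 0; 2^-1; 2^-1; 0; - g / sqrtC 3]]
  else
    [:: [:: 0; 0; 0; 0; 0]; [:: 0; 2^-1; 2^-1; 0; g / sqrtC 3]; [:: 0; 0; 0; 1; 0]]) i) k.

Lemma realizes_ex g : realizes (@Sex R) (Aex g) (Bex g) Cex Dex.
Proof.
move=> l _; rewrite resolventE /Zsum; apply/matrixP => i j; rewrite (ord1 i); expand => /=.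
by case: j => [[|[|[|[|[|j]]]]] ?] //=; field; rewrite ?sqrtC3_neq0.
Qed.

Lemma colligation_contraction_ex g :
  g * g^* < 3 / 8 -> colligation_contraction (Aex g) (Bex g) Cex Dex.
Proof.
move=> g_small x u; rewrite -subr_ge0.
pose u1 := u (lift ord0 ord0) 0; pose u2 := u (lift ord0 (lift ord0 ord0)) 0.
pose u4 := u (lift ord0 (lift ord0 (lift ord0 (lift ord0 ord0)))) 0.
pose w := x ord0 0 - u4 / sqrtC 3.
rewrite [leRHS](_ : _ = (u1 - u2) * (u1 - u2)^* / 2
                        + 2 * (3 / 8 - g * g^*) * (w * w^*) :> CC).
  rewrite addr_ge0 ?divr_ge0 ?mul_conjC_ge0 ?ler0n //.
  by rewrite mulr_ge0 ?mul_conjC_ge0 // mulr_ge0 ?ler0n // subr_ge0 ltW.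
rewrite /colnorm /sqnorm /inner /w /u1 /u2 /u4; expand => /=; conj_simpl.
by field: (sqrtCK (3 : CC)); rewrite ?sqrtC3_neq0.
Qed.

Definition coresolvent (g : CC) (z : 'I_2 -> CC) : 'M[CC]_3 :=
  let a := (z i0)^* in let b := (z i1)^* in
  \matrix_(i < 3, j < 3) nth 0 (nth [::]
    [:: [:: 1; - b * g^*; a * g^*];
        [:: a; 1 - a * b * g^*; a ^+ 2 * g^*];
        [:: b; - b ^+ 2 * g^*; 1 + a * b * g^*]] i) j.

Lemma coresolventE g z :
  invmx (1%:M - \sum_k (z k)^* *: adjm (Aex g k)) = coresolvent g z.
Proof.
apply: invmx_rinv; apply/matrixP => i j; rewrite /adjm; expand.
by case: i => [[|[|[|i]]] ?] //; case: j => [[|[|[|j]]] ?] //=; conj_simpl; ring.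
Qed.

Lemma Dspace_ex_sym g (v : 'I_2 -> 'cV[CC]_3) :
  in_Dspace (Aex g) Cex v -> v i1 (lift ord0 ord0) 0 = v i0 (lift ord0 (lift ord0 ord0)) 0.
Proof.
move=> [N [z [y [_ def_v]]]]; rewrite !def_v !summxE; apply: eq_bigr => i _.
by rewrite /Dgen coresolventE /adjm; expand => /=; conj_simpl; ring.
Qed.

Lemma adjoint_isometric_on_ex g : adjoint_isometric_on (Aex g) (Bex g) Cex Dex.
Proof.
move=> v y /Dspace_ex_sym v_sym.
rewrite /colnorm /sqnorm /inner /adjm; expand => /=; conj_simpl; rewrite v_sym.
by field: (sqrtCK (3 : CC)); rewrite ?sqrtC3_neq0.
Qed.

Lemma Aex_compress g : (Cex *m Aex g i0 *m Aex g i1 *m adjm Cex) 0 0 = - g / 4.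
Proof. by rewrite /adjm; expand => /=; conj_simpl; field. Qed.

Lemma Aex_unit_equiv_inj g g' : unit_equiv Cex (Aex g) Cex (Aex g') -> g = g'.
Proof.
move=> /(unit_equiv_compress i0 i1) /matrixP /(_ 0 0).
rewrite !Aex_compress => /eqP.
by rewrite (inj_eq (mulIf _)) ?invr_eq0 ?pnatr_eq0 // eqr_opp => /eqP ->.
Qed.

End Example.

Theorem mainTheorem6 (R : realType) :
  schur_class (@Sex R) /\
  (forall gamma : R[i], `|gamma| < sqrtC (3 / 8) ->
     [/\ contractive_pair (@Cex R) (Aex gamma),
         observable (@Cex R) (Aex gamma) &
         exists B : 'I_2 -> 'M[R[i]]_(3, 5),
           weakly_coisometric_realization (@Sex R) (Aex gamma) B (@Cex R) (@Dex R)]) /\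
  (forall gamma gamma' : R[i], gamma != gamma' ->
     ~ unit_equiv (@Cex R) (Aex gamma) (@Cex R) (Aex gamma')).
Proof.
split; first exact: schur_class_Sex.
split=> [g g_small | g g' neq_gg' /Aex_unit_equiv_inj eq_gg']; last first.
  by rewrite eq_gg' eqxx in neq_gg'.
have {}g_small : g * g^* < 3 / 8.
  by apply: mul_conjC_lt_sqrtC g_small; rewrite divr_ge0 ?ler0n.
split; [exact: contractive_pair_ex | exact: observable_ex | exists (Bex g)].
split; first exact: realizes_ex.
  exact: colligation_contraction_ex.
exact: adjoint_isometric_on_ex.
Qed.
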